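(* The axiom system $PAL_{int}$ is complete with respect to the class of all topo-models: for every formula $\varphi\in\mathcal{L}_{PAL_{int}}$, if $\varphi$ is valid in every topo-model, then $\varphi$ is a theorem of $PAL_{int}$.
   Context: Fix a countable set $\mathit{Prop}$ of propositional variables and a finite non-empty set $\mathcal{A}$ of agents. The language $\mathcal{L}_{PAL_{int}}$ is given by $\varphi ::= p \mid \neg\varphi \mid \varphi\wedge\varphi \mid K_i\varphi \mid \mathrm{int}(\varphi)\mid [\varphi]\varphi$ with $p\in\mathit{Prop}$, $i\in\mathcal{A}$; $\vee,\rightarrow,\leftrightarrow$ are abbreviations, $\bot := p\wedge\neg p$. Topo-models: Let $(X,\tau)$ be a topological space, $\mathrm{Int}$ its interior operator. A neighbourhood function set $\Phi$ on $(X,\tau)$ is a set of partial functions $\theta$ from $X$ to functions $\mathcal{A}\to\tau$ such that for all $x,y\in Dom(\theta)$, $i\in\mathcal{A}$, $U\in\tau$: (1) $\theta(x)(i)\in\tau$; (2) $x\in\theta(x)(i)$; (3) $\theta(x)(i)\subseteq Dom(\theta)$; (4) if $y\in\theta(x)(i)$ then $\theta(x)(i)=\theta(y)(i)$; (5) $\theta|_U\in\Phi$, where $Dom(\theta|_U)=Dom(\theta)\cap U$ and $\theta|_U(x)(i)=\theta(x)(i)\cap U$. A topo-model is $\mathcal{M}=(X,\tau,\Phi,V)$ with $V$ assigning to each $p$ a subset of $X$. A neighbourhood situation is $(x,\theta)$ with $\theta\in\Phi$, $x\in Dom(\theta)$. Semantics: $(x,\theta)\models p$ iff $x\in V(p)$;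 Booleans as usual; $(x,\theta)\models K_i\varphi$ iff $(y,\theta)\models\varphi$ for all $y\in\theta(x)(i)$; $(x,\theta)\models\mathrm{int}(\varphi)$ iff $x\in\mathrm{Int}([\![\varphi]\!]^\theta)$ where $[\![\varphi]\!]^\theta=\{y\in Dom(\theta)\mid (y,\theta)\models\varphi\}$; $(x,\theta)\models[\varphi]\psi$ iff $(x,\theta)\models\mathrm{int}(\varphi)$ implies $(x,\theta^\varphi)\models\psi$, where $\theta^\varphi=\theta|_{\mathrm{Int}([\![\varphi]\!]^\theta)}$. Validity in $\mathcal{M}$ means truth at all neighbourhood situations. The axiom system $PAL_{int}$ has axioms: propositional tautologies; $K_i(\varphi\to\psi)\to(K_i\varphi\to K_i\psi)$; $K_i\varphi\to\varphi$; $K_i\varphi\to K_iK_i\varphi$; $\neg K_i\varphi\to K_i\neg K_i\varphi$; $\mathrm{int}(\varphi\to\psi)\to(\mathrm{int}(\varphi)\to\mathrm{int}(\psi))$; $\mathrm{int}(\varphi)\to\varphi$; $\mathrm{int}(\varphi)\to\mathrm{int}(\mathrm{int}(\varphi))$; $K_i\varphi\to\mathrm{int}(\varphi)$; (R1) $[\varphi]p\leftrightarrow(\mathrm{int}(\varphi)\to p)$; (R2) $[\varphi]\neg\psi\leftrightarrow(\mathrm{int}(\varphi)\to\neg[\varphi]\psi)$; (R3) $[\varphi](\psi\wedge\chi)\leftrightarrow[\varphi]\psi\wedge[\varphi]\chi$; (R4) $[\varphi]\mathrm{int}(\psi)\leftrightarrow(\mathrm{int}(\varphi)\to\mathrm{int}([\varphi]\psi))$;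 (R5) $[\varphi]K_i\psi\leftrightarrow(\mathrm{int}(\varphi)\to K_i[\varphi]\psi)$; (R6) $[\varphi][\psi]\chi\leftrightarrow[\neg[\varphi]\neg\mathrm{int}(\psi)]\chi$; rules: modus ponens, from $\varphi$ infer $K_i\varphi$, from $\varphi$ infer $\mathrm{int}(\varphi)$, from $\varphi$ infer $[\psi]\varphi$. *)

From mathcomp Require Import all_boot.
From mathcomp Require Import boolp classical_sets topology.

Set Implicit Arguments.
Unset Strict Implicit.
Unset Printing Implicit Defensive.

Local Open Scope classical_set_scope.

Inductive form (P Ag : Type) : Type :=
| Var  : P -> form P Ag
| Neg  : form P Ag -> form P Ag
| And  : form P Ag -> form P Ag -> form P Ag
| K    : Ag -> form P Ag -> form P Ag
| Int  : form P Ag -> form P Ag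
| Ann  : form P Ag -> form P Ag -> form P Ag.   (* Ann phi psi = [phi]psi *)

Arguments Var {P Ag}.
Arguments Neg {P Ag}.
Arguments And {P Ag}.
Arguments K {P Ag}.
Arguments Int {P Ag}.
Arguments Ann {P Ag}.

Definition Imp {P Ag} (a b : form P Ag) : form P Ag := Neg (And a (Neg b)).
Definition Or {P Ag} (a b : form P Ag) : form P Ag := Neg (And (Neg a) (Neg b)).
Definition Iff {P Ag} (a b : form P Ag) : form P Ag := And (Imp a b) (Imp b a).

(* A partial function theta from X to functions Ag -> (subsets of X);
   [None] means "undefined". *)
Definition nfun (X Ag : Type) := X -> option (Ag -> set X).

Definition Dom {X Ag : Type} (theta : nfun X Ag) : set X :=
  [set x | theta x <> None].

Definition restrict {X Ag : Type} (theta : nfun X Ag) (U : set X) : nfun X Ag :=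
  fun x => if pselect (U x) then
             match theta x with
             | Some f => Some (fun i => f i `&` U)
             | None => None
             end
           else None.

Definition nbhd_function_set {X : topologicalType} {Ag : Type}
  (Phi : set (nfun X Ag)) : Prop :=
  forall theta, Phi theta ->
    (forall x f, theta x = Some f -> forall i : Ag,
       [/\ open (f i),
           f i x,
           f i `<=` Dom theta &
           (forall y g, theta y = Some g -> f i y -> f i = g i)])
    /\ (forall U : set X, open U -> Phi (restrict theta U)).

(** * Semantics: sat V phi theta x  means  (x, theta) |= phi *)
Fixpoint sat {X : topologicalType} {P Ag : Type} (V : P -> set X)
  (phi : form P Ag) : nfun X Ag -> X -> Prop :=
  match phi with
  | Var p => fun _ x => V p x
  | Neg a => fun theta x => ~ sat V a theta x
  | And a b => fun theta x => sat V a theta x /\ sat V b theta x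
  | K i a => fun theta x =>
      match theta x with
      | Some f => forall y, f i y -> sat V a theta y
      | None => True
      end
  | Int a => fun theta x =>
      interior [set y | Dom theta y /\ sat V a theta y] x
  | Ann a b => fun theta x =>
      let Ia := interior [set y | Dom theta y /\ sat V a theta y] in
      Ia x -> sat V b (restrict theta Ia) x
  end.

Definition ext {X : topologicalType} {P Ag : Type} (V : P -> set X)
  (phi : form P Ag) (theta : nfun X Ag) : set X :=
  [set y | Dom theta y /\ sat V phi theta y].

Definition valid_in {X : topologicalType} {P Ag : Type}
  (Phi : set (nfun X Ag)) (V : P -> set X) (phi : form P Ag) : Prop :=
  forall theta x, Phi theta -> Dom theta x -> sat V phi theta x.

Definition topo_valid {P Ag : Type} (phi : form P Ag) : Prop :=
  forall (X : topologicalType) (Phi : set (nfun X Ag)) (V : P -> set X),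
    nbhd_function_set Phi -> valid_in Phi V phi.

(* truth-functional evaluation treating K_i, int and [.]-formulas (and
   variables) as atoms; propositional tautologies are the formulas true
   under every such valuation *)
Fixpoint tval {P Ag : Type} (v : form P Ag -> bool) (phi : form P Ag) : bool :=
  match phi with
  | Neg a => ~~ tval v a
  | And a b => tval v a && tval v b
  | _ => v phi
  end.

Definition ptaut {P Ag : Type} (phi : form P Ag) : Prop :=
  forall v : form P Ag -> bool, tval v phi = true.

Inductive thm {P Ag : Type} : form P Ag -> Prop :=
| Ax_taut  phi : ptaut phi -> thm phi
| Ax_K     i a b : thm (Imp (K i (Imp a b)) (Imp (K i a) (K i b)))
| Ax_T     i a : thm (Imp (K i a) a)
| Ax_4     i a : thm (Imp (K i a) (K i (K i a)))
| Ax_5     i a : thm (Imp (Neg (K i a)) (K i (Neg (K i a))))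
| Ax_IntK  a b : thm (Imp (Int (Imp a b)) (Imp (Int a) (Int b)))
| Ax_IntT  a : thm (Imp (Int a) a)
| Ax_Int4  a : thm (Imp (Int a) (Int (Int a)))
| Ax_KInt  i a : thm (Imp (K i a) (Int a))
| Ax_R1    a p : thm (Iff (Ann a (Var p)) (Imp (Int a) (Var p)))
| Ax_R2    a b : thm (Iff (Ann a (Neg b)) (Imp (Int a) (Neg (Ann a b))))
| Ax_R3    a b c : thm (Iff (Ann a (And b c)) (And (Ann a b) (Ann a c)))
| Ax_R4    a b : thm (Iff (Ann a (Int b)) (Imp (Int a) (Int (Ann a b))))
| Ax_R5    i a b : thm (Iff (Ann a (K i b)) (Imp (Int a) (K i (Ann a b))))
| Ax_R6    a b c : thm (Iff (Ann a (Ann b c)) (Ann (Neg (Ann a (Neg (Int b)))) c))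
| R_MP     a b : thm (Imp a b) -> thm a -> thm b
| R_NecK   i a : thm a -> thm (K i a)
| R_NecInt a : thm a -> thm (Int a)
| R_NecAnn b a : thm a -> thm (Ann b a).

From Pilot Require Import Defs.
From HB Require Import structures.
From mathcomp Require Import all_boot.
From mathcomp Require Import boolp classical_sets topology.
From mathcomp Require Import zify.
Set Implicit Arguments.
Unset Strict Implicit.
Unset Printing Implicit Defensive.
Local Open Scope classical_set_scope.

Local Notation tval := Defs.tval.

(* A canonical topo-model.  Its points are sets of formulas, and a set is open
   when it is closed upwards along the relation x R y := "y contains every a
   with int a in x" between maximal consistent sets; int a -> a and
   int a -> int (int a) make R a preorder, so int is interpreted by R.  A
   maximal consistent x is sent to the family of its K_i-successor classes,
   which are S5 classes and open because of K_i a -> K_i (K_i a) and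
   K_i a -> int a.  Announcements need no canonical counterpart: the reduction
   axioms R1-R6 are valid in every topo-model and strictly decrease a weight,
   so the truth lemma treats [a]b by induction on that weight.  A non-theorem
   a is then refuted at a Lindenbaum extension of {~ a}. *)

Section Derivability.
Variables (P Ag : Type).
Notation F := (form P Ag).

Fixpoint imps (l : seq F) (c : F) : F :=
  if l is b :: l then Imp b (imps l c) else c.

Fixpoint all_in (G : set F) (l : seq F) : Prop :=
  if l is b :: l then G b /\ all_in G l else True.

Lemma tval_imp (v : F -> bool) a b : tval v (Imp a b) = tval v a ==> tval v b.
Proof. by rewrite /=; case: (tval v a); case: (tval v b). Qed.

Lemma tval_imps v l c : tval v (imps l c) = all (tval v) l ==> tval v c.
Proof. by elim: l => //= b l ->; case: (tval v b); case: all; case: (tval v c). Qed.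

Lemma imps_rcons l b c : imps (rcons l b) c = imps l (Imp b c).
Proof. by elim: l => //= a l ->. Qed.

Lemma all_in_cat G l1 l2 : all_in G (l1 ++ l2) <-> all_in G l1 /\ all_in G l2.
Proof. by elim: l1 => [|b l IH] /=; [tauto | rewrite IH; tauto]. Qed.

Lemma all_in_sub (G H : set F) l : G `<=` H -> all_in G l -> all_in H l.
Proof. by move=> GH; elim: l => //= b l IH [/GH ? /IH]. Qed.

Lemma thm_imps_MP l c : all_in thm l -> thm (imps l c) -> thm c.
Proof. by elim: l => //= b l IH [tb /IH tl] tbl; apply: tl; apply: R_MP tbl tb. Qed.

Lemma thm_taut l c :
  all_in thm l -> (forall v, all (tval v) l -> tval v c) -> thm c.
Proof.
move=> tl taut; apply: (thm_imps_MP tl); apply: Ax_taut => v.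
by rewrite tval_imps; apply/implyP/taut.
Qed.

Definition derivable (G : set F) (c : F) := exists2 l, all_in G l & thm (imps l c).

Definition consistent (G : set F) := forall a, ~ derivable G (And a (Neg a)).

Definition mcs (G : set F) := consistent G /\ forall a, G a \/ G (Neg a).

Lemma derivable_thm G c : thm c -> derivable G c.
Proof. by exists [::]. Qed.

Lemma derivable_in G c : G c -> derivable G c.
Proof. by exists [:: c] => //; apply: Ax_taut => v /=; case: (tval v c). Qed.

Lemma derivable_MP G a b : derivable G (Imp a b) -> derivable G a -> derivable G b.
Proof.
move=> [l1 Gl1 t1] [l2 Gl2 t2]; exists (l1 ++ l2); first exact/all_in_cat.
apply: (thm_taut (l := [:: imps l1 (Imp a b); imps l2 a])) => // v /=.
rewrite !tval_imps all_cat tval_imp.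
by case: (all _ l1); case: (all _ l2); case: (tval v a); case: (tval v b).
Qed.

Lemma derivable_taut G l c : all_in (derivable G) l ->
  (forall v, all (tval v) l -> tval v c) -> derivable G c.
Proof.
move=> Gl taut; have : derivable G (imps l c).
  by apply/derivable_thm/Ax_taut => v; rewrite tval_imps; apply/implyP/taut.
elim: l Gl {taut} => //= b l IH [Gb /IH dl] dbl.
by apply: dl; apply: derivable_MP dbl Gb.
Qed.

Lemma derivable_deduction S e c :
  derivable (S `|` [set e]) c -> derivable S (Imp e c).
Proof.
move=> [l Sel tl].
have imp_intro b : derivable S b -> derivable S (Imp e b).
  move=> db; apply: (derivable_taut (l := [:: b])) => // v /=.
  by rewrite andbT => ->; rewrite andbF.
have Sl : all_in (derivable S) (map (Imp e) l).
  elim: l Sel {tl} => //= b l IH [[Sb | ->] /IH Sl]; split=> //.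
    exact/imp_intro/derivable_in.
  by apply/derivable_thm/Ax_taut => v /=; case: (tval v e).
apply: (derivable_taut (l := Imp e (imps l c) :: map (Imp e) l)) => [|v] /=.
  by split=> //; apply/imp_intro/derivable_thm.
rewrite all_map tval_imps; case Ve: (tval v e) => //=.
rewrite !negbK (@eq_all _ _ (tval v)) => [/andP[/implyP] //|b /=].
by rewrite Ve negbK.
Qed.

Lemma derivable_set0 a : derivable set0 a -> thm a.
Proof. by case=> -[|b l [] //]. Qed.

Lemma consistent_Neg a : ~ thm a -> consistent [set Neg a].
Proof.
move=> na c; rewrite -[[set _]]set0U => /derivable_deduction /derivable_set0 tc.
apply/na/(thm_taut (l := [:: Imp (Neg a) (And c (Neg c))])) => // v /=.
by rewrite andbT; case: (tval v a); case: (tval v c).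
Qed.

Lemma derivable_contra G a :
  derivable G a -> derivable G (Neg a) -> ~ consistent G.
Proof.
move=> da dna /(_ a); apply; apply: (derivable_taut (l := [:: a; Neg a])) => // v /=.
by case: tval.
Qed.

Section MaximalConsistent.
Variable G : set F.
Hypothesis mG : mcs G.

Lemma mcs_derivable a : derivable G a -> G a.
Proof.
move=> da; case: (mG.2 a) => // /derivable_in dna.
by case: (derivable_contra da dna mG.1).
Qed.

Lemma mcs_thm a : thm a -> G a.
Proof. by move=> ta; apply/mcs_derivable/derivable_thm. Qed.

Lemma mcs_neg a : G (Neg a) <-> ~ G a.
Proof.
split=> [Gna Ga|]; last by case: (mG.2 a).
exact: derivable_contra (derivable_in Ga) (derivable_in Gna) mG.1.
Qed.

Lemma mcs_and a b : G (And a b) <-> G a /\ G b.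
Proof.
split=> [Gab|[Ga Gb]].
  have dab : all_in (derivable G) [:: And a b] by split=> //; apply: derivable_in.
  by split; apply/mcs_derivable/(derivable_taut dab) => v /= /andP[/andP[]].
apply/mcs_derivable/(derivable_taut (l := [:: a; b])) => [|v /= /and3P[-> ->]] //.
by do !split; apply: derivable_in.
Qed.

Lemma mcs_imp a b : G (Imp a b) <-> (G a -> G b).
Proof.
rewrite /Imp mcs_neg mcs_and mcs_neg; split=> [nab Ga|abG [/abG]] //.
by apply: contrapT => nb; apply: nab.
Qed.

Lemma mcs_MP a b : thm (Imp a b) -> G a -> G b.
Proof. by move/mcs_thm/mcs_imp. Qed.

Lemma mcs_iff a b : G (Iff a b) -> (G a <-> G b).
Proof. by rewrite /Iff mcs_and !mcs_imp. Qed.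

End MaximalConsistent.

Lemma consistent_ext S a :
  consistent S -> consistent (S `|` [set a]) \/ consistent (S `|` [set Neg a]).
Proof.
move=> cS; apply: contrapT => /not_orP[/existsNP[b /contrapT /derivable_deduction db]].
move=> /existsNP[c /contrapT /derivable_deduction dc].
apply: (cS b).
apply: (derivable_taut (l := [:: Imp a (And b (Neg b)); Imp (Neg a) (And c (Neg c))])) => //= v.
by case: (tval v a); case: (tval v b); case: (tval v c).
Qed.

Lemma all_in_chain (S : set F) (C : set (set F)) l :
  total_on C subset -> all_in (S `|` \bigcup_(X in C) X) l ->
  all_in S l \/ exists2 X, C X & all_in (S `|` X) l.
Proof.
move=> tot; elim: l => [|b l IH] /=; first by left.
have widen X Y : X `<=` Y -> all_in (S `|` X) l -> all_in (S `|` Y) l.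
  by move=> XY; apply: all_in_sub => z [?|/XY ?]; [left|right].
move=> [Sb /IH [Sl|[X CX Sl]]].
- case: Sb => [Sb|[Y CY Yb]]; first by left.
  by right; exists Y => //; split; [right | apply: all_in_sub Sl => ? ?; left].
- case: Sb => [Sb|[Y CY Yb]]; first by right; exists X => //; split=> //; left.
  have [XY|YX] := tot _ _ CX CY.
    by right; exists Y => //; split; [right | apply: widen XY Sl].
  by right; exists X => //; split=> //; right; apply: YX.
Qed.

Lemma lindenbaum S : consistent S -> exists2 D, S `<=` D & mcs D.
Proof.
move=> cS; pose Ext := [set A | consistent (S `|` A)].
have [A [ExtA maxA]] : exists A, Ext A /\ forall B, A `<` B -> ~ Ext B.
  apply: Zorn_bigcup => C CExt tot a [l Sl tl].
  have [Sl'|[X CX Sl']] := all_in_chain tot Sl; first by apply: (cS a); exists l.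
  by apply: (CExt X CX a); exists l.
exists (S `|` A) => //; split=> // a; apply: contrapT => /not_orP[na nna].
have grow b : ~ (S `|` A) b -> ~ Ext (A `|` [set b]).
  move=> nb; apply: maxA; split; first by move=> ? ?; left.
  by move=> /(_ b (or_intror erefl)) Ab; apply: nb; right.
by case: (consistent_ext a ExtA); rewrite -setUA; [apply: grow na | apply: grow nna].
Qed.

End Derivability.

Section NormalBox.
Variables (P Ag : Type).
Notation F := (form P Ag).
Variable B : F -> F.
Hypothesis box_K : forall a b, thm (Imp (B (Imp a b)) (Imp (B a) (B b))).
Hypothesis box_nec : forall a, thm a -> thm (B a).

Lemma thm_box_imps l c : thm (imps l c) -> thm (imps (map B l) (B c)).
Proof.
elim/last_ind: l c => [|l b IH] c; first exact: box_nec.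
rewrite map_rcons !imps_rcons => /IH tB.
have := box_K b c; set Kbc := Imp _ _ => tK.
apply: (thm_taut (l := [:: imps (map B l) (B (Imp b c)); Kbc])) => [|v /=]; first by do !split.
rewrite !tval_imps andbT !tval_imp.
by case: (all _ _); case: (tval v (B b)); case: (tval v (B c)); case: (tval v (B (Imp b c))).
Qed.

Lemma mcs_boxP x a : mcs x ->
  x (B a) <-> forall y, mcs y -> (forall b, x (B b) -> y b) -> y a.
Proof.
move=> mx; split=> [xa y _|]; first by apply.
apply: contraPP => nxa.
have cons_y : consistent ([set b | x (B b)] `|` [set Neg a]).
  move=> c /derivable_deduction dc; apply: nxa; apply: (mcs_derivable mx).
  have [l xl tl] : derivable [set b | x (B b)] a.
    apply: (derivable_taut (l := [:: Imp (Neg a) (And c (Neg c))])) => [|v /=] //.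
    by rewrite andbT; case: (tval v a); case: (tval v c).
  exists (map B l); last exact: thm_box_imps.
  by elim: l xl {tl} => //= b l IH [? /IH].
have [y sub my] := lindenbaum cons_y.
move=> /(_ y my (fun b xb => sub b (or_introl xb))).
by apply/(mcs_neg my)/sub; right.
Qed.

End NormalBox.

Section Restriction.
Variables (X : topologicalType) (Ag : Type).

Lemma restrict_restrict (th : nfun X Ag) U W :
  restrict (restrict th U) W = restrict th (U `&` W).
Proof.
apply: funext => x; rewrite /restrict.
case: (pselect ((U `&` W) x)) => [[Ux Wx]|nUW] /=.
  case: pselect => // ?; case: pselect => // ? /=; case: (th x) => // f.
  by congr Some; apply: funext => i; rewrite setIA.
case: pselect => // Wx; case: pselect => // Ux.
by case: nUW.
Qed.

Lemma restrict_setT (th : nfun X Ag) : restrict th setT = th.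
Proof.
apply: funext => x; rewrite /restrict; case: pselect => [? /=|/(_ I)[]].
by case: (th x) => // f; congr Some; apply: funext => i; rewrite setIT.
Qed.

Lemma Dom_restrict (th : nfun X Ag) U y : Dom (restrict th U) y <-> U y /\ Dom th y.
Proof.
by rewrite /Dom /restrict /=; case: pselect => Uy; case: (th y) => //= *; split=> // -[].
Qed.

End Restriction.

Section ReductionSemantics.
Variables (X : topologicalType) (P Ag : Type) (V : P -> set X).
Notation F := (form P Ag).
Implicit Types (th : nfun X Ag) (a b c : F).

Lemma sat_Ann_Var th a p x :
  sat V (Ann a (Var p)) th x <-> sat V (Imp (Int a) (Var p)) th x.
Proof.
rewrite /Imp /=; split=> [h [h1 h2]|h h1]; first exact: h2 (h h1).
by apply: contrapT => h2; exact: h (conj h1 h2).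
Qed.

Lemma sat_Ann_Neg th a b x :
  sat V (Ann a (Neg b)) th x <-> sat V (Imp (Int a) (Neg (Ann a b))) th x.
Proof.
rewrite /Imp /=; split=> [h [h1 h2]|h h1 hb].
  by apply: h2 => h3; apply: (h h1); apply: h3.
by apply: h; split=> // /(_ h1).
Qed.

Lemma sat_Ann_And th a b c x :
  sat V (Ann a (And b c)) th x <-> sat V (And (Ann a b) (Ann a c)) th x.
Proof.
by rewrite /=; split=> [h|[h1 h2] h3]; [split=> /h [] | split; [apply: h1 | apply: h2]].
Qed.

Lemma sat_Ann_Int th a b x :
  sat V (Ann a (Int b)) th x <-> sat V (Imp (Int a) (Int (Ann a b))) th x.
Proof.
rewrite /Imp /=; set I := interior (ext V a th).
suff E : I x -> interior (ext V b (restrict th I)) x <->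
    interior [set y | Dom th y /\ (I y -> sat V b (restrict th I) y)] x.
  split=> [h [h1 h2]|h h1]; first by apply: h2; apply/(E h1)/h.
  by apply/(E h1); apply: contrapT => h2; exact: h (conj h1 h2).
move=> Ix; split.
  by apply: interiorS => y [/Dom_restrict [Iy Dy] sb]; split.
have II : interior I = I by apply/interior_id/open_interior.
move=> h; have : interior ([set y | Dom th y /\ (I y -> sat V b (restrict th I) y)] `&` I) x.
  by rewrite interiorI II.
by apply: interiorS => y [[Dy hy] Iy]; split; [apply/Dom_restrict | apply: hy].
Qed.

Lemma sat_Ann_K th a b i x :
  sat V (Ann a (K i b)) th x <-> sat V (Imp (Int a) (K i (Ann a b))) th x.
Proof.
rewrite /Imp /=; set I := interior (ext V a th).
have E : I x -> restrict th I x =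
   if th x is Some f then Some (fun i => f i `&` I) else None.
  by move=> Ix; rewrite /restrict; case: pselect.
split=> [h [h1 h2] | h h1].
  apply: h2; move: (h h1); rewrite (E h1); case: (th x) => // f hf y fy Iy.
  by apply: hf; split.
rewrite (E h1); case E2: (th x) => [f|] // y [fy Iy].
apply: contrapT => hn; apply: h; split=> //; rewrite E2 => hf; apply: hn.
exact: hf y fy Iy.
Qed.

Lemma sat_Ann_Ann th a b c x :
  sat V (Ann a (Ann b c)) th x <-> sat V (Ann (Neg (Ann a (Neg (Int b)))) c) th x.
Proof.
rewrite /=; set I := interior (ext V a th).
set J := interior (ext V b (restrict th I)).
have -> : [set y | Dom th y /\ ~ (I y -> ~ J y)] = I `&` J.
  apply/seteqP; split=> y.
    by move=> [Dy hn]; split; apply: contrapT => hn2; apply: hn => // /hn2.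
  by move=> [Iy Jy]; split=> [|/(_ Iy)//]; case: (interior_subset Iy).
rewrite (interior_id _).1; last by apply: openI; apply: open_interior.
rewrite -restrict_restrict.
by split=> [h [h1 h2]|h h1 h2]; [exact: h h1 h2 | exact: h (conj h1 h2)].
Qed.

End ReductionSemantics.

Section Reduction.
Variables (P Ag : Type).
Notation F := (form P Ag).

(* The factor [weight a + 4] makes each reduction axiom R1-R6 strictly
   decrease the weight, R6 included. *)
Fixpoint weight (f : F) : nat :=
  match f with
  | Var _ => 1
  | Neg a | K _ a | Int a => (weight a).+1
  | And a b => (maxn (weight a) (weight b)).+1
  | Ann a b => (weight a + 4) * weight b
  end.

Lemma weight_gt0 f : 0 < weight f.
Proof. by elim: f => //= a _ b wb; rewrite muln_gt0 wb addn4. Qed.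

Lemma Ann_reduction a b : exists r : F,
  [/\ thm (Iff (Ann a b) r), weight r < weight (Ann a b) &
      forall (X : topologicalType) (V : P -> set X) th x,
        sat V (Ann a b) th x <-> sat V r th x].
Proof.
have := weight_gt0 a; case: b => [p|b|b c|i b|b|b c] wa.
- exists (Imp (Int a) (Var p)); split=> [|/=|*]; [exact: Ax_R1 | lia | exact: sat_Ann_Var].
- exists (Imp (Int a) (Neg (Ann a b))); split=> [|/=|*]; [exact: Ax_R2 | | exact: sat_Ann_Neg].
  by have := weight_gt0 b; nia.
- exists (And (Ann a b) (Ann a c)); split=> [|/=|*]; [exact: Ax_R3 | | exact: sat_Ann_And].
  by have := weight_gt0 b; have := weight_gt0 c; nia.
- exists (Imp (Int a) (K i (Ann a b))); split=> [|/=|*]; [exact: Ax_R5 | | exact: sat_Ann_K].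
  by have := weight_gt0 b; nia.
- exists (Imp (Int a) (Int (Ann a b))); split=> [|/=|*]; [exact: Ax_R4 | | exact: sat_Ann_Int].
  by have := weight_gt0 b; nia.
- exists (Ann (Neg (Ann a (Neg (Int b)))) c).
  split=> [|/=|*]; [exact: Ax_R6 | | exact: sat_Ann_Ann].
  by have := weight_gt0 b; have := weight_gt0 c; nia.
Qed.

End Reduction.

Definition canon_space (P Ag : Type) := set (form P Ag).

Section CanonicalTopology.
Variables (P Ag : Type).
Notation F := (form P Ag).
Notation X := (canon_space P Ag).

Definition int_rel (x y : set F) := forall a, x (Int a) -> y a.

(* Non-maximal sets are isolated points, outside the domain of the canonical
   neighbourhood function. *)
Definition canon_le (x y : X) := x = y \/ [/\ mcs x, mcs y & int_rel x y].

Definition canon_open : set (set X) :=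
  [set U | forall x y, U x -> canon_le x y -> U y].

Lemma canon_openT : canon_open setT. Proof. by []. Qed.

Lemma canon_openI : setI_closed canon_open.
Proof. by move=> U W oU oW x y [Ux Wx] xy; split; [apply: oU Ux xy | apply: oW Wx xy]. Qed.

Lemma canon_open_bigcup (I : Type) (f : I -> set X) :
  (forall i, canon_open (f i)) -> canon_open (\bigcup_i f i).
Proof. by move=> of_ x y [i _ fx] xy; exists i => //; apply: of_ fx xy. Qed.

End CanonicalTopology.

HB.instance Definition _ (P Ag : Type) := gen_eqMixin (canon_space P Ag).
HB.instance Definition _ (P Ag : Type) := gen_choiceMixin (canon_space P Ag).
HB.instance Definition _ (P Ag : Type) := isOpenTopological.Build
  (canon_space P Ag) (@canon_openT P Ag) (@canon_openI P Ag) (@canon_open_bigcup P Ag).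

Section CanonicalModel.
Variables (P Ag : Type).
Notation F := (form P Ag).
Notation X := (canon_space P Ag).

Lemma canon_openE (U : set X) : open U = canon_open U. Proof. by []. Qed.

Lemma canon_le_trans (x y z : X) : canon_le x y -> canon_le y z -> canon_le x z.
Proof.
case=> [->//|[mx my xy]] [<-|[_ mz yz]]; first by right.
by right; split=> // a /(mcs_MP mx (Ax_Int4 a)) /xy /yz.
Qed.

Lemma canon_interiorE (A : set X) x : interior A x <-> forall y, canon_le x y -> A y.
Proof.
rewrite /interior nbhsE /=; split=> [[U [oU Ux] UA] y xy|xA].
  exact/UA/(oU _ _ Ux xy).
exists (canon_le x); last by move=> y /xA.
by split; [rewrite canon_openE => y z; apply: canon_le_trans | left].
Qed.

Definition K_rel i (x y : set F) := forall a, x (K i a) -> y a.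

Definition K_class i (x : X) : set X := [set y | mcs y /\ K_rel i x y].

Definition canon_theta : nfun X Ag :=
  fun x => if pselect (mcs x) then Some (fun i => K_class i x) else None.

Definition canon_val (p : P) : set X := fun x => x (Var p).

Definition canon_Phi : set (nfun X Ag) :=
  [set th | exists2 U, open U & th = restrict canon_theta U].

Lemma K_class_eq i (x y : X) : mcs x -> mcs y -> K_rel i x y -> K_class i x = K_class i y.
Proof.
move=> mx my xy; apply/seteqP; split=> z [mz xz]; split=> // a.
  move=> ya; apply: contrapT => nza.
  have /xy : x (K i (Neg (K i a))).
    by apply: (mcs_MP mx (Ax_5 i a)); apply/(mcs_neg mx) => /xz.
  by move/(mcs_neg my).
by move/(mcs_MP mx (Ax_4 i a))/xy/xz.
Qed.

Lemma K_class_open i (x : X) : mcs x -> open (K_class i x).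
Proof.
rewrite canon_openE => mx y z [my xy] [<-//|[_ mz yz]]; split=> // a.
by move/(mcs_MP mx (Ax_4 i a))/xy/(mcs_MP my (Ax_KInt i a))/yz.
Qed.

Lemma canon_theta_mcs (x : X) : mcs x -> canon_theta x = Some (K_class^~ x).
Proof. by rewrite /canon_theta; case: pselect. Qed.

Lemma Dom_canon_theta (x : X) : Dom canon_theta x <-> mcs x.
Proof. by rewrite /Dom /canon_theta /=; case: pselect. Qed.

Lemma restrict_canon_theta_Some U (x : X) f : restrict canon_theta U x = Some f ->
  [/\ U x, mcs x & f = fun i => K_class i x `&` U].
Proof.
rewrite /restrict /canon_theta; case: (pselect (U x)) => // Ux.
by case: (pselect (mcs x)) => // mx [<-].
Qed.

Lemma canon_Phi_nbhd : nbhd_function_set canon_Phi.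
Proof.
move=> th [U oU ->]; split=> [x f /restrict_canon_theta_Some [Ux mx ->] i|W oW]; last first.
  by exists (U `&` W); [apply: openI | rewrite restrict_restrict].
split.
- by apply: openI => //; apply: K_class_open.
- by split=> //; split=> // a; apply: (mcs_MP mx (Ax_T i a)).
- by move=> y [[my _] Uy]; apply/Dom_restrict; split=> //; apply/Dom_canon_theta.
- move=> y g /restrict_canon_theta_Some [Uy my ->] [[_ xy] _].
  by rewrite (K_class_eq mx my xy).
Qed.

Lemma canon_theta_Phi : canon_Phi canon_theta.
Proof. by exists setT; [apply: openT | rewrite restrict_setT]. Qed.

Lemma truth_lemma f x : mcs x -> sat canon_val f canon_theta x <-> x f.
Proof.
have [n] := ubnP (weight f); elim: n f x => // n IH f x.
case: f => [p|a|a b|i a|a|a b] wf mx //=.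
- by rewrite IH // mcs_neg.
- by rewrite IH ?(IH b) ?mcs_and //=; move: wf => /=; lia.
- have IHa y : mcs y -> sat canon_val a canon_theta y <-> y a by apply: IH.
  rewrite canon_theta_mcs // (mcs_boxP (@Ax_K _ _ i) (R_NecK i) _ mx).
  by split=> [h y my xy|h y [my xy]]; apply/IHa => //; apply: h.
- have IHa y : mcs y -> sat canon_val a canon_theta y <-> y a by apply: IH.
  rewrite canon_interiorE; split=> [h|xa y [<-|[_ my xy]]].
  + apply/(mcs_boxP (@Ax_IntK _ _) (@R_NecInt _ _) _ mx) => y my xy.
    by have [_ /IHa] := h y (or_intror (And3 mx my xy)); apply.
  + by split; [apply/Dom_canon_theta | apply/IHa => //; apply: (mcs_MP mx (Ax_IntT a))].
  + by split; [apply/Dom_canon_theta | apply/IHa => //; apply: xy].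
have [r [tr wr sr]] := Ann_reduction a b.
by rewrite -/(sat _ (Ann a b) _ _) sr IH ?(mcs_iff mx (mcs_thm mx tr)) //; lia.
Qed.

End CanonicalModel.

Theorem completeness (P Ag : Type) (phi : form P Ag) : topo_valid phi -> thm phi.
Proof.
move=> valid; apply: contrapT => /consistent_Neg /lindenbaum [D nphiD mD].
have := valid _ _ (@canon_val P Ag) (@canon_Phi_nbhd P Ag) _ D (@canon_theta_Phi P Ag).
move=> /(_ (proj2 (Dom_canon_theta D) mD)) /(truth_lemma phi mD).
by apply/(mcs_neg mD)/nphiD.
Qed.

Theorem mainTheorem2 (Pv : countType) (Ag : finType) (hAg : (0 < #|Ag|)%N)
  (phi : form Pv Ag) :
  topo_valid phi -> thm phi.
Proof. exact: completeness. Qed.
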